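(* Let $r \in \mathbb{Z}_{\geqslant 2}$. For any real number $x \geqslant 1$, $$\sum_{n_1 \leqslant x, \dotsc, n_r \leqslant x} \left( \mu \left( n_1 \right) + \dotsb + \mu \left( n_r \right) \right) \left \lfloor \frac{x}{n_1 \dotsb n_r} \right \rfloor = r \sum_{n \leqslant x} \tau_{r-1}(n),$$ where the sum on the left runs over all $r$-tuples of positive integers $n_1,\dots,n_r \leqslant x$.
   Context: $\mu$ is the Möbius function, $\lfloor \cdot \rfloor$ the integer part, and $\tau_k(n)$ is the number of ways of writing $n$ as an ordered product of $k$ positive integers (so $\tau_1 \equiv 1$, $\tau_2 = \tau$ is the divisor function). *)

From HB Require Import structures.
From mathcomp Require Import all_boot all_order all_algebra.
From mathcomp Require Import reals.
Set Implicit Arguments. Unset Strict Implicit. Unset Printing Implicit Defensive.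
Import Order.TTheory GRing.Theory Num.Theory.
Local Open Scope ring_scope.

(* Moebius function on positive integers (mu 0 := 0, irrelevant). *)
Definition mobius (n : nat) : int :=
  if n == 0%N then 0
  else if all (fun p => logn p n <= 1)%N (primes n) then (-1) ^+ size (primes n)
  else 0.

(* tau_k n = number of ordered k-tuples (d_1,...,d_k) of positive integers
   with d_1 * ... * d_k = n  (for n >= 1; each d_i then lies in [1, n]). *)
Definition tau (k n : nat) : nat :=
  #|[set t : {ffun 'I_k -> 'I_n.+1} | [forall i, 0 < (t i : nat)]%N
        && ((\prod_(i < k) (t i : nat))%N == n)]|.

From HB Require Import structures.
From mathcomp Require Import all_boot all_order all_algebra.
From mathcomp Require Import reals.
Import Order.TTheory GRing.Theory Num.Theory.
Local Open Scope ring_scope.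

(* Since floor (x / m) = floor (N / m) with N = floor x, it counts the multiples
   of m in [1, N], so the left side is the sum over i < r and 1 <= k <= N of
   \sum_t mu (t i) [t_1 ... t_r | k].  Separating the coordinate a = t i from
   the others, whose product is m, Moebius inversion gives
   \sum_a mu a [a m | k] = [m = k], and the (r-1)-tuples with product k are
   counted by tau_(r-1) k. *)

Lemma mobius0 : mobius 0 = 0. Proof. by []. Qed.

Lemma mobius_sqr_dvd (p d : nat) : prime p -> (p ^ 2 %| d)%N -> mobius d = 0.
Proof.
move=> p_pr p2d; have [->|d_gt0] := posnP d; first exact: mobius0.
rewrite /mobius eqn0Ngt d_gt0 /=.
have p_d : p \in primes d.
  by rewrite mem_primes p_pr d_gt0 (dvdn_trans _ p2d) ?dvdn_exp.
have : (2 <= logn p d)%N by rewrite -pfactor_dvdn.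
by case: allP => // /(_ p p_d); case: (logn p d) => [|[|]].
Qed.

Lemma mobius_primeM (p d : nat) : prime p -> ~~ (p %| d)%N ->
  mobius (p * d) = - mobius d.
Proof.
move=> p_pr npd; have p_gt0 := prime_gt0 p_pr.
have d_gt0 : (0 < d)%N by rewrite lt0n; apply: contraNneq npd => ->.
have p_nd : p \notin primes d by rewrite mem_primes p_pr d_gt0 npd.
have primes_pd : perm_eq (primes (p * d)) (p :: primes d).
  apply: uniq_perm; rewrite ?primes_uniq //= ?p_nd ?primes_uniq // => q.
  by rewrite primesM // primes_prime // mem_seq1 in_cons.
rewrite /mobius !eqn0Ngt d_gt0 muln_gt0 p_gt0 d_gt0 /=.
rewrite (perm_size primes_pd) (perm_all _ primes_pd) /=.
rewrite lognM // logn_prime // eqxx logn_coprime ?prime_coprime //.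
have -> : all (fun q => logn q (p * d) <= 1)%N (primes d) =
          all (fun q => logn q d <= 1)%N (primes d).
  apply: eq_in_all => q q_d; rewrite lognM // logn_prime //.
  by case: eqP q_d p_nd => [->|] // ->.
by case: (all _ _); rewrite ?oppr0 // exprS mulN1r.
Qed.

Lemma mobius_primeM_dvd (p d : nat) : prime p -> (p %| d)%N -> mobius (p * d) = 0.
Proof.
move=> p_pr /dvdnP[c ->]; apply: (mobius_sqr_dvd _ _ p_pr).
by rewrite mulnCA dvdn_mull.
Qed.

Lemma filter_divisors_pmul_dvd (p n : nat) : (0 < p)%N -> (0 < n)%N ->
  perm_eq [seq d <- divisors (p * n) | (p %| d)%N] [seq (p * d)%N | d <- divisors n].
Proof.
move=> p_gt0 n_gt0; have pn_gt0 : (0 < p * n)%N by rewrite muln_gt0 p_gt0.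
apply: uniq_perm; first exact/filter_uniq/divisors_uniq.
  by rewrite map_inj_uniq ?divisors_uniq // => a b /eqP; rewrite eqn_pmul2l // => /eqP.
move=> d; rewrite mem_filter -dvdn_divisors //.
apply/andP/mapP => [[/dvdnP[c ->] dvd_cp_pn]|[c c_n ->]].
  exists c; last exact: mulnC.
  by rewrite -dvdn_divisors // -(dvdn_pmul2l p_gt0) mulnC.
by rewrite dvdn_mulr // dvdn_pmul2l // dvdn_divisors.
Qed.

Lemma filter_divisors_primeM_ndvd (p n : nat) : prime p -> (0 < n)%N ->
  perm_eq [seq d <- divisors (p * n) | ~~ (p %| d)]%N
          [seq d <- divisors n | ~~ (p %| d)]%N.
Proof.
move=> p_pr n_gt0; have pn_gt0 : (0 < p * n)%N by rewrite muln_gt0 prime_gt0.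
apply: uniq_perm; rewrite ?filter_uniq ?divisors_uniq // => d.
rewrite !mem_filter -!dvdn_divisors //; case pd: (p %| d)%N => //=.
by rewrite Gauss_dvdr // coprime_sym prime_coprime ?pd.
Qed.

Lemma sum_divisors_mobius (q : nat) : (0 < q)%N ->
  \sum_(d <- divisors q) mobius d = (q == 1)%N%:R.
Proof.
move=> q_gt0; have [q_lt1|q_gt1|->] := ltngtP q 1; last by rewrite big_seq1.
  by rewrite ltnNge q_gt0 in q_lt1.
have [p p_pr [n qE]] : exists2 p, prime p & exists n, q = (p * n)%N.
  exists (pdiv q); first exact: pdiv_prime.
  by exists (q %/ pdiv q)%N; rewrite mulnC divnK // pdiv_dvd.
subst q; have n_gt0 : (0 < n)%N by rewrite muln_gt0 in q_gt0; case/andP: q_gt0.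
rewrite (bigID (dvdn p)) /= -[X in X + _]big_filter -[X in _ + X]big_filter.
rewrite (perm_big _ (filter_divisors_pmul_dvd _ _ (prime_gt0 p_pr) n_gt0)).
rewrite (perm_big _ (filter_divisors_primeM_ndvd _ _ p_pr n_gt0)) big_map.
rewrite big_filter [X in X + _]big_mkcond [X in _ + X]big_mkcond -big_split /=.
rewrite big1 // => d _; case: ifP => [np_d|/negbFE p_d].
  by rewrite (mobius_primeM _ _ p_pr np_d) addNr.
by rewrite (mobius_primeM_dvd _ _ p_pr p_d) addr0.
Qed.

Lemma sum_ord_mobius_dvd (N q : nat) : (0 < q <= N)%N ->
  \sum_(d < N.+1 | (d %| q)%N) mobius d = (q == 1)%N%:R.
Proof.
case/andP=> q_gt0 q_le_N; rewrite -sum_divisors_mobius //.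
rewrite -(big_mkord (fun d => d %| q)%N) -big_filter; apply: perm_big.
apply: uniq_perm; rewrite ?filter_uniq ?iota_uniq ?divisors_uniq // => d.
rewrite mem_filter -dvdn_divisors // mem_index_iota /= andbC.
by rewrite ltnS; apply: andb_idl => /(dvdn_leq q_gt0)/leq_trans; apply.
Qed.

Lemma sum_mobius_mul_dvd (N m k : nat) : (0 < m)%N -> (0 < k <= N)%N ->
  \sum_(a < N.+1) mobius a * (a * m %| k)%N%:R = (m == k)%N%:R.
Proof.
move=> m_gt0 /andP[k_gt0 k_le_N].
have [m_k|m_nk] := boolP (m %| k)%N; last first.
  rewrite big1 => [|a _]; first by case: eqP m_nk => // ->; rewrite dvdnn.
  by rewrite (contraNF (dvdn_trans (dvdn_mull a (dvdnn m)))) ?mulr0.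
have [q kE] := dvdnP m_k; subst k.
have -> : (m == q * m)%N = (q == 1)%N by rewrite eq_sym -{2}(mul1n m) eqn_pmul2r.
have q_gt0 : (0 < q)%N by rewrite muln_gt0 in k_gt0; case/andP: k_gt0.
rewrite -(sum_ord_mobius_dvd N q); last first.
  by rewrite q_gt0 (leq_trans (leq_pmulr _ m_gt0)).
rewrite [RHS]big_mkcond; apply: eq_bigr => a _.
by rewrite dvdn_pmul2r //; case: (a %| q)%N; rewrite ?mulr1 ?mulr0.
Qed.

Lemma divn_count_dvd (n m : nat) : (0 < m)%N ->
  (n %/ m = \sum_(1 <= k < n.+1) (m %| k))%N.
Proof.
move=> m_gt0; elim: n => [|n IHn]; first by rewrite div0n big_geq.
by rewrite big_nat_recr //= divnS // IHn addnC.
Qed.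

Lemma floor_divrn (R : archiRealFieldType) (x : R) (m : nat) : (0 < m)%N ->
  Num.floor (x / m%:R) = (Num.floor x %/ m)%Z.
Proof.
move=> m_gt0; have mR : 0 < m%:R :> R by rewrite ltr0n.
apply: floor_def; rewrite ler_pdivlMr // ltr_pdivrMr // -!(intrM _ _ m).
apply/andP; split.
  apply: le_trans (floor_le x); rewrite ler_int lez_floor // eqz_nat -lt0n //.
apply: (lt_le_trans (floorD1_gt x)); rewrite ler_int lezD1; exact: ltz_ceil.
Qed.

Section FfunInsert.
Context {T : finType} {n : nat} (i : 'I_n.+1).

Definition ffun_ins (a : T) (g : {ffun 'I_n -> T}) : {ffun 'I_n.+1 -> T} :=
  [ffun j => if unlift i j is Some j' then g j' else a].

Lemma ffun_ins_id a g : ffun_ins a g i = a.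
Proof. by rewrite ffunE unlift_none. Qed.

Lemma ffun_ins_lift a g j : ffun_ins a g (lift i j) = g j.
Proof. by rewrite ffunE liftK. Qed.

Lemma big_ffun_ins (R : Type) (idx : R) (op : Monoid.com_law idx)
    (F : {ffun 'I_n.+1 -> T} -> R) :
  \big[op/idx]_f F f = \big[op/idx]_a \big[op/idx]_g F (ffun_ins a g).
Proof.
rewrite pair_big (reindex (fun p => ffun_ins p.1 p.2)) //.
exists (fun f : {ffun 'I_n.+1 -> T} => (f i, [ffun j : 'I_n => f (lift i j)])).
  move=> [a g] _ /=.
  by rewrite ffun_ins_id; congr (_, _); apply/ffunP => j; rewrite ffunE ffun_ins_lift.
move=> f _; apply/ffunP => j; rewrite ffunE.
by case: unliftP => [j' ->|->]; rewrite ?ffunE.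
Qed.

Lemma big_ord_ffun_ins (R : Type) (idx : R) (op : Monoid.com_law idx)
    (G : T -> R) a g :
  \big[op/idx]_(j < n.+1) G (ffun_ins a g j)
    = op (G a) (\big[op/idx]_(j < n) G (g j)).
Proof.
by rewrite (bigD1_ord i) //= ffun_ins_id; under eq_bigr do rewrite ffun_ins_lift.
Qed.

Lemma forall_ffun_ins (P : pred T) a g :
  [forall j, P (ffun_ins a g j)] = P a && [forall j, P (g j)].
Proof.
apply/forallP/andP => [P_ins|[Pa /forallP Pg] j].
  split; first by rewrite -(ffun_ins_id a g).
  by apply/forallP => j; rewrite -(ffun_ins_lift a g).
by rewrite ffunE; case: unlift.
Qed.

End FfunInsert.

Lemma tau_widen (n k N : nat) : (k <= N)%N ->
  tau n k = #|[set g : {ffun 'I_n -> 'I_N.+1} |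
                 [forall j, 0 < (g j : nat)]%N && ((\prod_(j < n) (g j : nat))%N == k)]|.
Proof.
move=> k_le_N; have k_lt_N1 : (k < N.+1)%N by [].
pose w (g : {ffun 'I_n -> 'I_k.+1}) := [ffun j => widen_ord k_lt_N1 (g j)].
have w_inj : injective w.
  move=> g h /ffunP w_gh; apply/ffunP => j; apply/val_inj.
  by have := w_gh j; rewrite !ffunE => /(congr1 val).
rewrite /tau -(card_imset _ w_inj); apply: eq_card => g; rewrite inE.
apply/imsetP/idP => [[h] |/andP[/forallP g_gt0 /eqP prod_g]].
  rewrite inE => h_tau ->.
  by under eq_forallb do rewrite ffunE; under eq_bigr do rewrite ffunE.
pose h := [ffun j => inord (g j) : 'I_k.+1].
have hE j : h j = g j :> nat.
  rewrite ffunE inordK // ltnS -prod_g.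
  by apply/dvdn_leq; [exact: prodn_gt0 | rewrite (bigD1 j) ?dvdn_mulr].
exists h; last by apply/ffunP => j; apply/val_inj; rewrite ffunE /= hE.
rewrite inE; apply/andP; split; first by apply/forallP => j; rewrite hE.
by rewrite -[X in _ == X]prod_g; apply/eqP/eq_bigr => j _; rewrite hE.
Qed.

Lemma sum_mobius_coord_dvd (N n k : nat) (i : 'I_n.+1) : (0 < k <= N)%N ->
  \sum_(t : {ffun 'I_n.+1 -> 'I_N.+1} | [forall j, 0 < (t j : nat)]%N)
     mobius (t i) * (\prod_(j < n.+1) (t j : nat) %| k)%N%:R = (tau n k)%:Z.
Proof.
case/andP=> k_gt0 k_le_N.
rewrite big_mkcond (big_ffun_ins i) /= exchange_big (tau_widen _ _ _ k_le_N).
rewrite -sum1_card -natz natr_sum [RHS]big_mkcond; apply: eq_bigr => g _.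
under eq_bigr do rewrite (forall_ffun_ins i (fun x : 'I_N.+1 => 0 < x)%N)
  big_ord_ffun_ins ffun_ins_id.
rewrite inE; case: (boolP [forall j, _]) => [/forallP g_gt0|_]; last first.
  by rewrite big1 // => a _; rewrite andbF.
have Pg_gt0 : (0 < \prod_(j < n) g j)%N by exact: prodn_gt0.
rewrite (eq_bigr (fun a : 'I_N.+1 => mobius a * (a * \prod_(j < n) g j %| k)%N%:R)).
  by rewrite sum_mobius_mul_dvd ?k_gt0 //; case: eqP.
by case=> -[|a] ? _ //=; rewrite mobius0 mul0r.
Qed.

Theorem theorem1p6 (R : realType) (r : nat) (x : R) :
  (2 <= r)%N -> 1 <= x ->
  let N := `|Num.floor x|%N in
  \sum_(t : {ffun 'I_r -> 'I_N.+1} | [forall i, 0 < (t i : nat)]%N)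
     (\sum_(i < r) mobius (t i)) *
     Num.floor (x / ((\prod_(i < r) (t i : nat))%N)%:R)
  = (r%:Z * \sum_(1 <= n < N.+1) (tau r.-1 n)%:Z).
Proof.
move=> r_ge2 x_ge1 N; case: r r_ge2 => [|n] // _.
have floorE : Num.floor x = N.
  by rewrite /N abszE ger0_norm // floor_ge0 (le_trans _ x_ge1).
pose P (t : {ffun 'I_n.+1 -> 'I_N.+1}) := (\prod_(j < n.+1) t j)%N.
have floor_count (t : {ffun 'I_n.+1 -> 'I_N.+1}) : [forall j, 0 < t j]%N ->
    Num.floor (x / (P t)%:R) = \sum_(1 <= k < N.+1) (P t %| k)%N%:R.
  move/forallP=> t_gt0; have P_gt0 : (0 < P t)%N by exact: prodn_gt0.
  by rewrite floor_divrn // floorE divz_nat divn_count_dvd // -natz natr_sum.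
rewrite (eq_bigr (fun t : {ffun 'I_n.+1 -> 'I_N.+1} => \sum_(i < n.+1)
    \sum_(1 <= k < N.+1) mobius (t i) * (P t %| k)%N%:R)); last first.
  by move=> t /floor_count ->; rewrite big_distrlr.
rewrite exchange_big (eq_bigr (fun=> \sum_(1 <= k < N.+1) (tau n k)%:Z)) => [|i _].
  by rewrite sumr_const card_ord -mulr_natl natz.
rewrite exchange_big; apply: eq_big_nat => k k_range; exact: sum_mobius_coord_dvd.
Qed.
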